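(* Let $L:(0,\infty)\to(0,\infty)$ be slowly varying, and suppose there is $K>1$ such that $L$ is non-increasing and strictly less than $1$ on $[K,\infty)$. Then the condition $$-\int_K^\infty\frac{\log L(r)}{r(\log r)^2}\,dr<\infty$$ is equivalent to the following condition: for every $\delta>0$ there exists $K_1=K_1(\delta)>K$ such that for all $r>K_1$, $$\sum_{k=1}^\infty\frac{\log L(r^{2^k})}{2^k\log r}>-\delta,$$ and therefore $\prod_{k=1}^\infty [L(r^{2^k})]^{2^{-k}}>r^{-\delta}$.
   Context: A function $L$ is slowly varying if $L(cr)/L(r)\to1$ as $r\to\infty$ for every $c>0$. *)

From HB Require Import structures.
From mathcomp Require Import all_boot all_order all_algebra.
From mathcomp Require Import all_classical all_reals all_analysis.
Set Implicit Arguments. Unset Strict Implicit. Unset Printing Implicit Defensive.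
Import Order.TTheory GRing.Theory Num.Theory.
Import numFieldNormedType.Exports.
Local Open Scope classical_set_scope.
Local Open Scope ring_scope.

Definition slowly_varying (R : realType) (L : R -> R) : Prop :=
  forall c : R, 0 < c -> (fun r => L (c * r) / L r) @ +oo --> (1 : R).

From HB Require Import structures.
From mathcomp Require Import all_boot all_order all_algebra.
From mathcomp Require Import all_classical all_reals all_analysis.
From mathcomp Require Import ring lra measurable_realfun.
Import Order.TTheory GRing.Theory Num.Theory.
Import numFieldNormedType.Exports.
Local Open Scope classical_set_scope.
Local Open Scope ring_scope.

Set Implicit Arguments. Unset Strict Implicit. Unset Printing Implicit Defensive.

(* Put a(t) := -ln L(t), which is nonnegative and nondecreasing on [K, +oo), and
   cut [r^2, +oo) into the blocks [r^(2^k), r^(2^(k+1))).  The integral of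
   1/(t ln^2 t) over the k-th block is 1/(2^(k+1) ln r), so by monotonicity of a
   the integral of a(t)/(t ln^2 t) over it lies between half the k-th term
   a(r^(2^k))/(2^k ln r) of the negated series and its (k+1)-th term.  Hence a
   finite integral, having small tails, makes the series small for all large r,
   while a series bounded at a single r bounds the integral.  The product is the
   exponential of ln r times the series. *)

Section DyadicPowers.
Context {R : realType}.
Implicit Types (r y : R) (k m n : nat).

Lemma ln_exp2n r k : 0 < r -> ln (r ^+ (2 ^ k)%N) = 2 ^+ k * ln r.
Proof. by move=> r0; rewrite lnXn// -[in LHS]mulr_natr natrX mulrC. Qed.

Lemma ler_exp2n r m n : 1 < r -> (m <= n)%N -> r ^+ (2 ^ m)%N <= r ^+ (2 ^ n)%N.
Proof. by move=> r1 mn; rewrite ler_eXn2l// leq_pexp2l. Qed.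

Lemma exp2n_ge r k : 1 <= r -> r <= r ^+ (2 ^ k)%N.
Proof. by move=> r1; rewrite ler_eXnr// expn_gt0. Qed.

Lemma exp2n_unbounded r y : 1 < r -> exists k, y <= r ^+ (2 ^ k)%N.
Proof.
move=> r1; have lnr_gt0 : 0 < ln r by rewrite ln_gt0.
have [y_le1|y_gt1] := leP y 1.
  by exists 0%N; rewrite expn0 expr1 (le_trans y_le1)// ltW.
exists (Num.truncn (ln y / ln r)).
rewrite -ler_ln ?posrE ?exprn_gt0 ?(lt_trans ltr01)// ln_exp2n ?(lt_trans ltr01)//.
rewrite -ler_pdivrMr//; apply/ltW/(lt_le_trans (truncnS_gt _)).
by rewrite -natrX ler_nat ltn_expl.
Qed.

End DyadicPowers.

Section InverseLogSquare.
Context {R : realType}.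
Notation mu := (@lebesgue_measure R).

Lemma is_derive_inv_ln (x : R) : 1 < x ->
  is_derive x 1 (fun y : R => - (ln y)^-1) ((x * ln x ^+ 2)^-1).
Proof.
move=> x1; have x0 : 0 < x by apply: lt_trans x1.
have lnx0 : ln x != 0 by rewrite gt_eqF// ln_gt0.
have dln : derivable (@ln R) x 1 by apply: ex_derive; exact: is_derive1_ln.
apply: DeriveDef; first by apply/derivableN/derivableV.
rewrite deriveN ?deriveV//; last exact: derivableV.
rewrite (@derive_val _ _ _ _ _ _ _ (is_derive1_ln x0)) scaleNr opprK.
by rewrite -[_ *: _]/(_ * _); field; rewrite lnx0 gt_eqF.
Qed.

Lemma continuous_inv_xln2 (x : R) : 1 < x ->
  {for x, continuous (fun t : R => (t * ln t ^+ 2)^-1)}.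
Proof.
move=> x1; have x0 : 0 < x by apply: lt_trans x1.
apply: continuousV; first by rewrite mulf_neq0 ?gt_eqF ?exprn_gt0 ?ln_gt0.
apply: continuousM; first exact: cvg_id.
apply: (@continuous_comp _ _ _ (@ln R) (fun z => z ^+ 2)).
  exact: continuous_ln.
exact: exprn_continuous.
Qed.

Lemma inv_xln2_gt0 (x : R) : 1 < x -> 0 < (x * ln x ^+ 2)^-1.
Proof. by move=> x1; rewrite invr_gt0 mulr_gt0 ?exprn_gt0 ?ln_gt0// (lt_trans ltr01). Qed.

Lemma measurable_inv_xln2 (D : set R) : measurable D -> D `<=` `]1, +oo[ ->
  measurable_fun D (fun t => (t * ln t ^+ 2)^-1).
Proof.
move=> mD D1; apply: (measurable_funS _ D1) => //.
apply: open_continuous_measurable_fun; first exact: interval_open.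
by move=> t; rewrite inE/= in_itv/= andbT; exact: continuous_inv_xln2.
Qed.

Lemma integral_inv_xln2 (x y : R) : 1 < x -> x <= y ->
  (\int[mu]_(t in `[x, y[) ((t * ln t ^+ 2)^-1)%:E = ((ln x)^-1 - (ln y)^-1)%:E)%E.
Proof.
move=> x1; rewrite le_eqVlt => /predU1P[<-|xy].
  by rewrite set_itvco0 integral_set0 subrr.
have x_sub : `[x, y] `<=` `]1, +oo[.
  by move=> t /=; rewrite !in_itv/= andbT => /andP[/(lt_le_trans x1)].
have dF t : 1 < t -> derivable (fun y : R => - (ln y)^-1) t 1.
  by move=> t1; apply: ex_derive; exact: is_derive_inv_ln.
have cF t : 1 < t -> {for t, continuous (fun y : R => - (ln y)^-1)}.
  by move=> t1; apply/differentiable_continuous; rewrite -derivable1_diffP; exact: dF.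
rewrite integral_itv_bndo_bndc; last first.
  by apply/measurable_EFinP; apply: measurable_inv_xln2 => // t /= /subset_itv_co_cc /x_sub.
rewrite (@continuous_FTC2 _ _ (fun y : R => - (ln y)^-1)) //.
- by rewrite -EFinB opprK addrC.
- apply: continuous_in_subspaceT => t /[!inE] /x_sub /=; rewrite in_itv/= andbT.
  exact: continuous_inv_xln2.
- split.
  + by move=> t; rewrite in_itv/= => /andP[/(lt_trans x1) t1 _]; exact: dF.
  + by apply: cvg_at_right_filter; exact: cF.
  + by apply: cvg_at_left_filter; apply: cF; exact: lt_trans xy.
- move=> t; rewrite in_itv/= => /andP[/(lt_trans x1) t1 _].
  by rewrite derive1E (@derive_val _ _ _ _ _ _ _ (is_derive_inv_ln t1)).
Qed.

End InverseLogSquare.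

Section NonnegItvIntegral.
Context {R : realType} (f : R -> R) (K : R).
Hypothesis mf : measurable_fun `[K, +oo[ (EFin \o f).
Hypothesis f_ge0 : forall t, K <= t -> 0 <= f t.
Notation mu := (@lebesgue_measure R).
Local Notation I D := (\int[mu]_(t in D) (f t)%:E)%E.

Lemma integral_itv_ge0 (D : set R) : D `<=` `[K, +oo[ -> (0 <= I D)%E.
Proof.
by move=> DK; apply: integral_ge0 => t /DK /=; rewrite in_itv/= andbT lee_fin => /f_ge0.
Qed.

Lemma le_integral_itv (D D' : set R) : measurable D -> measurable D' ->
  D `<=` D' -> D' `<=` `[K, +oo[ -> (I D <= I D')%E.
Proof.
move=> mD mD' DD' D'K; apply: ge0_subset_integral => //.
- exact: measurable_funS mf.
- by move=> t /D'K /=; rewrite in_itv/= andbT lee_fin => /f_ge0.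
Qed.

Lemma integral_itv_split (x y : R) (b : itv_bound R) :
  K <= x -> x <= y -> (BLeft y <= b)%O ->
  I [set` Interval (BLeft x) b] =
  (I `[x, y[ + I [set` Interval (BLeft y) b])%E.
Proof.
move=> Kx xy yb; have xb : (BLeft x <= b)%O by apply: le_trans yb; rewrite bnd_simp.
have sub : [set` Interval (BLeft x) b] `<=` `[K, +oo[.
  by move=> t; rewrite /= itv_boundlr => /andP[xt _]; rewrite in_itv/= andbT (le_trans Kx).
rewrite (@itv_bndbnd_setU _ _ _ (BLeft y)) ?bnd_simp// ge0_integral_setU//.
- by rewrite -itv_bndbnd_setU ?bnd_simp//; exact: measurable_funS mf.
- rewrite -itv_bndbnd_setU ?bnd_simp// => t /sub /=.
  by rewrite in_itv/= andbT lee_fin => /f_ge0.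
- rewrite disj_set2E; apply/eqP/seteqP; split => t //= [].
  rewrite !itv_boundlr => /andP[_]; rewrite bnd_simp => ty /andP[].
  by rewrite bnd_simp leNgt ty.
Qed.

Lemma integral_itvcy_sup :
  I `[K, +oo[ = ereal_sup (range (fun n : nat => I `[K, (K + n%:R)%R[)).
Proof.
pose F (n : nat) := `[K, K + n%:R[%classic.
have ndF : nondecreasing_seq F.
  move=> m n mn; rewrite subsetEset => t; rewrite /F/= !in_itv/= => /andP[-> tm] /=.
  by apply: (lt_le_trans tm); rewrite lerD2l ler_nat.
have FK n : F n `<=` `[K, +oo[.
  by move=> t; rewrite /F/= !in_itv/= andbT => /andP[].
have UF : \bigcup_n F n = `[K, +oo[%classic.
  apply/seteqP; split=> [t [n _ /FK]//|t] /=; rewrite in_itv/= andbT => Kt.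
  exists (Num.truncn (t - K)).+1 => //=; rewrite /F/= in_itv/= Kt/=.
  by rewrite -ltrBlDl truncnS_gt.
have mF n : measurable_fun (F n) (EFin \o f) by exact: measurable_funS mf.
have F_ge0 n t : F n t -> (0 <= (EFin \o f) t)%E.
  by move=> /FK /=; rewrite in_itv/= andbT lee_fin => /f_ge0.
have cvgI : I (F n) @[n --> \oo] --> I (\bigcup_n F n).
  by apply: ge0_nondecreasing_set_cvg_integral => // n; exact: measurable_itv.
rewrite UF in cvgI.
have cvg_sup : I (F n) @[n --> \oo] --> ereal_sup (range (fun n => I (F n))).
  apply: ereal_nondecreasing_cvgn.
  by apply: ge0_nondecreasing_set_nondecreasing_integral => // n; exact: measurable_itv.
exact: cvg_unique cvgI cvg_sup.
Qed.

Lemma integral_itvcy_lty (M : R) : (forall y, K <= y -> (I `[K, y[ <= M%:E)%E) ->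
  (I `[K, +oo[ < +oo)%E.
Proof.
move=> IM; rewrite integral_itvcy_sup; apply: (@le_lt_trans _ _ M%:E); last exact: ltry.
by apply: ge_ereal_sup => _ [n _ <-]; apply: IM; rewrite lerDl.
Qed.

Lemma integral_itvcy_tail_small (e : R) : (I `[K, +oo[ < +oo)%E -> 0 < e ->
  exists2 X, K <= X & (I `[X, +oo[ <= e%:E)%E.
Proof.
move=> Ifin e0.
have I_fin : I `[K, +oo[ \is a fin_num by rewrite ge0_fin_numE// integral_itv_ge0.
have : (I `[K, +oo[ - e%:E < I `[K, +oo[)%E by rewrite lteBlDr// lteDl.
rewrite {2}integral_itvcy_sup => /ereal_sup_gt[_ [n _ <-]].
set X := K + n%:R => head_large.
have KX : K <= X by rewrite lerDl.
exists X => //.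
have head_sub : `[K, X[ `<=` `[K, +oo[.
  by move=> t /=; rewrite !in_itv/= andbT => /andP[].
have tail_sub : `[X, +oo[ `<=` `[K, +oo[.
  by move=> t /=; rewrite !in_itv/= !andbT; exact: le_trans.
have head_fin : I `[K, X[ \is a fin_num.
  rewrite ge0_fin_numE ?integral_itv_ge0//.
  by apply: le_lt_trans Ifin; exact: le_integral_itv.
have tail_fin : I `[X, +oo[ \is a fin_num.
  rewrite ge0_fin_numE ?integral_itv_ge0//.
  by apply: le_lt_trans Ifin; exact: le_integral_itv.
move: head_large; rewrite (@integral_itv_split _ _ (BInfty _ false) (lexx K) KX)//.
rewrite -(fineK head_fin) -(fineK tail_fin) -EFinD lte_fin lee_fin.
lra.
Qed.

End NonnegItvIntegral.

Section DyadicCriterion.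
Context {R : realType} (a : R -> R) (K : R).
Hypothesis K_gt1 : 1 < K.
Hypothesis a_ge0 : forall t, K <= t -> 0 <= a t.
Hypothesis a_nondecr : forall s t, K <= s -> s <= t -> a s <= a t.
Notation mu := (@lebesgue_measure R).
Local Notation I D := (\int[mu]_(t in D) (a t / (t * ln t ^+ 2))%:E)%E.

Definition dyadic_sum (r : R) (n : nat) :=
  \sum_(1 <= k < n) a (r ^+ (2 ^ k)%N) / (2 ^+ k * ln r).

Let K_le_exp2n r k : K <= r -> K <= r ^+ (2 ^ k)%N.
Proof. by move=> Kr; rewrite (le_trans Kr)// exp2n_ge// ltW// (lt_le_trans K_gt1). Qed.

Let weight_ge0 t : K <= t -> 0 <= a t / (t * ln t ^+ 2).
Proof.
move=> Kt; apply: mulr_ge0; first exact: a_ge0.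
exact/ltW/inv_xln2_gt0/(lt_le_trans K_gt1 Kt).
Qed.

Let measurable_weight :
  measurable_fun `[K, +oo[ (fun t => (a t / (t * ln t ^+ 2))%:E).
Proof.
apply/measurable_EFinP/measurable_funM; last first.
  apply: measurable_inv_xln2 => // t /=; rewrite !in_itv/= !andbT.
  exact: lt_le_trans.
have a_max_mono : nondecreasing_fun (fun t => a (Num.max t K)).
  move=> s t st; apply: a_nondecr; first by rewrite le_max lexx orbT.
  by rewrite ge_max !le_max st lexx !orbT.
apply: eq_measurable_fun (nondecreasing_measurable _ a_max_mono) => //.
by move=> t; rewrite inE/= in_itv/= andbT => Kt; rewrite max_l.
Qed.

Lemma integral_weight_itv_bounds (x y : R) : K <= x -> x <= y ->
  ((a x * ((ln x)^-1 - (ln y)^-1))%:E <= I `[x, y[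
    <= (a y * ((ln x)^-1 - (ln y)^-1))%:E)%E.
Proof.
move=> Kx xy; have x1 : 1 < x by apply: lt_le_trans Kx.
have sub1 : `[x, y[ `<=` `]1, +oo[.
  by move=> t /=; rewrite !in_itv/= andbT => /andP[/(lt_le_trans x1)].
have subK : `[x, y[ `<=` `[K, +oo[.
  by move=> t /=; rewrite !in_itv/= andbT => /andP[/(le_trans Kx)].
have h_ge0 t : `[x, y[%classic t -> (0 <= ((t * ln t ^+ 2)^-1)%:E)%E.
  by move=> /sub1 /=; rewrite in_itv/= andbT lee_fin => /inv_xln2_gt0/ltW.
have mh : measurable_fun `[x, y[ (fun t => ((t * ln t ^+ 2)^-1)%:E).
  by apply/measurable_EFinP; apply: measurable_inv_xln2 sub1.
have mw := measurable_funS (measurable_itv _) subK measurable_weight.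
rewrite !EFinM -integral_inv_xln2// -!ge0_integralZl_EFin ?a_ge0 ?(le_trans Kx)//.
apply/andP; split; apply: ge0_le_integral => //.
- by move=> t /[dup] /h_ge0; rewrite !lee_fin => h0 _; rewrite mulr_ge0 ?a_ge0.
- exact/measurable_EFinP/measurable_funM/measurable_EFinP.
- move=> t /[dup] /h_ge0; rewrite !lee_fin => h0 /=; rewrite in_itv/= => /andP[xt _].
  by rewrite ler_wpM2r// a_nondecr.
- by move=> t /subK /=; rewrite in_itv/= andbT lee_fin => /weight_ge0.
- exact/measurable_EFinP/measurable_funM/measurable_EFinP.
- move=> t /[dup] /h_ge0; rewrite !lee_fin => h0 /=; rewrite in_itv/= => /andP[xt ty].
  by rewrite ler_wpM2r// a_nondecr ?(le_trans Kx)// ltW.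
Qed.

Let dyadic_term_ge0 r k : K <= r -> 0 <= a (r ^+ (2 ^ k)%N) / (2 ^+ k * ln r).
Proof.
move=> Kr; rewrite divr_ge0 ?a_ge0 ?K_le_exp2n// mulr_ge0 ?exprn_ge0//.
by rewrite ln_ge0// ltW// (lt_le_trans K_gt1).
Qed.

Lemma dyadic_sum_ge0 r n : K <= r -> 0 <= dyadic_sum r n.
Proof. by move=> Kr; apply: sumr_ge0 => k _; exact: dyadic_term_ge0. Qed.

Lemma nondecreasing_dyadic_sum r : K <= r -> nondecreasing_seq (dyadic_sum r).
Proof.
move=> Kr; apply/nondecreasing_seqP => -[|n]; first by rewrite /dyadic_sum !big_geq.
by rewrite /dyadic_sum [X in _ <= X]big_nat_recr//= lerDl dyadic_term_ge0.
Qed.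

Lemma integral_weight_exp2n_ge r k : K <= r ->
  ((a (r ^+ (2 ^ k)%N) / (2 ^+ k * ln r) / 2)%:E
     <= I `[(r ^+ (2 ^ k)%N)%R, (r ^+ (2 ^ k.+1)%N)%R[)%E.
Proof.
move=> Kr; have r1 : 1 < r by apply: lt_le_trans Kr.
have lnr0 : ln r != 0 by rewrite gt_eqF// ln_gt0.
have /andP[+ _] := integral_weight_itv_bounds (K_le_exp2n k Kr) (ler_exp2n r1 (leqnSn k)).
apply: le_trans.
rewrite !ln_exp2n ?(lt_trans ltr01)// exprS lee_fin le_eqVlt; apply/orP; left.
by apply/eqP; field; rewrite lnr0 expf_neq0.
Qed.

Lemma integral_weight_exp2n_le r k : K <= r ->
  (I `[(r ^+ (2 ^ k)%N)%R, (r ^+ (2 ^ k.+1)%N)%R[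
     <= (a (r ^+ (2 ^ k.+1)%N) / (2 ^+ k.+1 * ln r))%:E)%E.
Proof.
move=> Kr; have r1 : 1 < r by apply: lt_le_trans Kr.
have lnr0 : ln r != 0 by rewrite gt_eqF// ln_gt0.
have /andP[_] := integral_weight_itv_bounds (K_le_exp2n k Kr) (ler_exp2n r1 (leqnSn k)).
move/le_trans; apply.
rewrite !ln_exp2n ?(lt_trans ltr01)// exprS lee_fin le_eqVlt; apply/orP; left.
by apply/eqP; field; rewrite lnr0 expf_neq0.
Qed.

Lemma integral_weight_dyadic_ge r n : K <= r ->
  ((dyadic_sum r n.+1 / 2)%:E <= I `[(r ^+ 2)%R, (r ^+ (2 ^ n.+1)%N)%R[)%E.
Proof.
move=> Kr; have r1 : 1 < r by apply: lt_le_trans Kr.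
elim: n => [|n IH].
  rewrite /dyadic_sum big_geq// mul0r (integral_itv_ge0 weight_ge0) => // t /=.
  by rewrite !in_itv/= andbT => /andP[+ _]; apply: le_trans; exact: K_le_exp2n 1 Kr.
rewrite /dyadic_sum big_nat_recr//= -/(dyadic_sum r n.+1) mulrDl EFinD.
rewrite (integral_itv_split measurable_weight weight_ge0 (K_le_exp2n 1 Kr)
  (ler_exp2n r1 (_ : 1 <= n.+1)%N))//.
  by apply: leeD => //; exact: integral_weight_exp2n_ge.
by rewrite bnd_simp ler_exp2n.
Qed.

Lemma integral_weight_dyadic_le r n : K <= r ->
  (I `[(r ^+ 2)%R, (r ^+ (2 ^ n.+1)%N)%R[ <= (dyadic_sum r n.+2)%:E)%E.
Proof.
move=> Kr; have r1 : 1 < r by apply: lt_le_trans Kr.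
elim: n => [|n IH].
  by rewrite set_itvco0 integral_set0 lee_fin dyadic_sum_ge0.
rewrite /dyadic_sum big_nat_recr//= -/(dyadic_sum r n.+2) EFinD.
rewrite (integral_itv_split measurable_weight weight_ge0 (K_le_exp2n 1 Kr)
  (ler_exp2n r1 (_ : 1 <= n.+1)%N))//.
  by apply: leeD => //; exact: integral_weight_exp2n_le.
by rewrite bnd_simp ler_exp2n.
Qed.

Lemma dyadic_sum_small : (I `[K, +oo[ < +oo)%E -> forall e, 0 < e ->
  exists2 X, K <= X & forall r n, X <= r -> dyadic_sum r n <= e.
Proof.
move=> Ifin e e0; have e2 : 0 < e / 2 by lra.
have [X KX tail_small] :=
  integral_itvcy_tail_small measurable_weight weight_ge0 Ifin e2.
exists X => // r [|n] Xr; first by rewrite /dyadic_sum big_geq// ltW.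
have Kr := le_trans KX Xr; have r1 := lt_le_trans K_gt1 Kr.
have sub : `[(r ^+ 2)%R, (r ^+ (2 ^ n.+1)%N)%R[ `<=` `[X, +oo[.
  move=> t /=; rewrite !in_itv/= andbT => /andP[+ _].
  by apply: le_trans; apply: le_trans Xr (exp2n_ge 1 (ltW r1)).
have XK : `[X, +oo[ `<=` `[K, +oo[.
  by move=> t /=; rewrite !in_itv/= !andbT; exact: le_trans.
suff : ((dyadic_sum r n.+1 / 2)%:E <= (e / 2)%:E)%E by rewrite lee_fin; lra.
apply: le_trans (integral_weight_dyadic_ge n Kr) (le_trans _ tail_small).
exact: (le_integral_itv measurable_weight weight_ge0 (measurable_itv _)
  (measurable_itv _) sub XK).
Qed.

Lemma integral_lty_of_dyadic_sum_bounded r M : K <= r ->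
  (forall n, dyadic_sum r n <= M) -> (I `[K, +oo[ < +oo)%E.
Proof.
move=> Kr SM; have r1 := lt_le_trans K_gt1 Kr.
have Kr2 : K <= r ^+ 2 := K_le_exp2n 1 Kr.
pose B := a (r ^+ 2) * ((ln K)^-1 - (ln (r ^+ 2))^-1) + M.
apply: (integral_itvcy_lty measurable_weight weight_ge0 (M := B)) => y Ky.
have [k yk] := exp2n_unbounded y r1.
have r2k : r ^+ 2 <= r ^+ (2 ^ k.+1)%N by exact: (@ler_exp2n _ r 1 k.+1 r1).
apply: (@le_trans _ _ (I `[K, (r ^+ (2 ^ k.+1)%N)%R[)).
  apply: (le_integral_itv measurable_weight weight_ge0 (measurable_itv _) (measurable_itv _)).
    move=> t /=; rewrite !in_itv/= => /andP[-> /lt_le_trans]; apply.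
    exact: le_trans yk (ler_exp2n r1 (leqnSn k)).
  by move=> t /=; rewrite !in_itv/= andbT => /andP[].
rewrite (integral_itv_split measurable_weight weight_ge0 (lexx K) Kr2) ?bnd_simp//.
rewrite /B EFinD; apply: leeD.
  by have /andP[] := integral_weight_itv_bounds (lexx K) Kr2.
by apply: le_trans (integral_weight_dyadic_le k Kr) _; rewrite lee_fin.
Qed.

End DyadicCriterion.

Lemma limn_nonincreasing {R : realType} (u : nat -> \bar R) :
  nonincreasing_seq u -> limn u = ereal_inf (range u).
Proof. by move=> u_ni; apply/cvg_lim => //; exact: ereal_nonincreasing_cvgn. Qed.

Lemma ereal_inf_EFin_gt {R : realType} (u : nat -> R) (x : R) :
  (x%:E < ereal_inf (range (fun n => (u n)%:E)))%E ->
  exists2 s, x < s & forall n, s <= u n.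
Proof.
have lb n : (ereal_inf (range (fun n => (u n)%:E)) <= (u n)%:E)%E.
  by apply: ereal_inf_lbound; exists n.
move: lb; case: ereal_inf => [s| |] // lb; last by have := lb 0%N.
by exists s; [rewrite -lte_fin | move=> n; rewrite -lee_fin].
Qed.

Section LogDyadicSeries.
Context {R : realType} (L : R -> R) (K : R).
Hypothesis L_gt0 : forall r, 0 < r -> 0 < L r.
Hypothesis K_gt1 : 1 < K.
Hypothesis L_noninc : forall x y, K <= x -> x <= y -> L y <= L x.
Hypothesis L_lt1 : forall x, K <= x -> L x < 1.
Notation mu := (@lebesgue_measure R).
Local Notation a := (fun t => - ln (L t)).

Let a_ge0 t : K <= t -> 0 <= a t.
Proof.
move=> Kt; have t0 : 0 < t by apply: lt_le_trans Kt; exact: lt_trans K_gt1.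
by rewrite oppr_ge0 ltW// ln_lt0// L_gt0//= L_lt1.
Qed.

Let a_nondecr s t : K <= s -> s <= t -> a s <= a t.
Proof.
move=> Ks st; have s0 : 0 < s by apply: lt_le_trans Ks; exact: lt_trans K_gt1.
by rewrite lerN2 ler_ln ?posrE ?L_gt0 ?(lt_le_trans s0)//; exact: L_noninc.
Qed.

Lemma dyadic_series_eq r : K <= r ->
  (\sum_(1 <= k <oo) (ln (L (r ^+ (2 ^ k)%N)) / (2 ^+ k * ln r))%:E)%E =
  ereal_inf (range (fun n => (- dyadic_sum a r n)%:E)).
Proof.
move=> Kr.
have -> : (fun n => \sum_(1 <= k < n) (ln (L (r ^+ (2 ^ k)%N)) / (2 ^+ k * ln r))%:E)%E =
          (fun n => (- dyadic_sum a r n)%:E).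
  apply/funext => n; rewrite sumEFin /dyadic_sum -sumrN; congr EFin.
  by apply: eq_bigr => k _; rewrite mulNr opprK.
apply: limn_nonincreasing; apply/nonincreasing_seqP => n.
by rewrite lee_fin lerN2 (nondecreasing_dyadic_sum K_gt1 a_ge0 Kr (leqnSn n)).
Qed.

Lemma dyadic_product_eq r : K <= r ->
  (\big[*%E/1%E]_(1 <= k <oo) ((L (r ^+ (2 ^ k)%N)) `^ (2 ^- k))%:E)%E =
  ereal_inf (range (fun n => (expR (- (ln r * dyadic_sum a r n)))%:E)).
Proof.
move=> Kr; have r0 : 0 < r by apply: lt_le_trans Kr; exact: lt_trans K_gt1.
have lnr_gt0 : 0 < ln r by rewrite ln_gt0// (lt_le_trans K_gt1).
have -> : (fun n => \big[*%E/1%E]_(1 <= k < n) ((L (r ^+ (2 ^ k)%N)) `^ (2 ^- k))%:E)%E =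
          (fun n => (expR (- (ln r * dyadic_sum a r n)))%:E).
  apply/funext => n; rewrite prodEFin /dyadic_sum mulr_sumr -sumrN expR_sum.
  congr EFin; apply: eq_bigr => k _.
  have Lk0 : L (r ^+ (2 ^ k)%N) != 0 by rewrite gt_eqF// L_gt0// exprn_gt0.
  rewrite /powR (negbTE Lk0); congr expR.
  by field; rewrite gt_eqF// expf_neq0.
apply: limn_nonincreasing; apply/nonincreasing_seqP => n.
rewrite lee_fin ler_expR lerN2; apply: ler_wpM2l; first exact: ltW.
exact: (nondecreasing_dyadic_sum K_gt1 a_ge0 Kr (leqnSn n)).
Qed.

Lemma dyadic_series_gt_of_integral_lty :
  (\int[mu]_(r in `[K, +oo[) ((- ln (L r)) / (r * (ln r) ^+ 2))%:E < +oo)%E ->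
  forall delta : R, 0 < delta -> exists K1 : R, K < K1 /\
    forall r : R, K1 < r ->
      ((- delta)%:E <
       \sum_(1 <= k <oo) (ln (L (r ^+ (2 ^ k)%N)) / (2 ^+ k * ln r))%:E)%E.
Proof.
move=> Ifin d d0; have d2 : 0 < d / 2 by lra.
have [X KX small] := dyadic_sum_small K_gt1 a_ge0 a_nondecr Ifin d2.
exists (X + 1); split => [|r Xr]; first lra.
rewrite dyadic_series_eq; last lra.
apply: (@lt_le_trans _ _ (- (d / 2))%:E); first by rewrite lte_fin; lra.
by apply: le_ereal_inf_tmp => _ [n _ <-]; rewrite lee_fin lerN2 small//; lra.
Qed.

Lemma integral_lty_of_dyadic_series_gt :
  (forall delta : R, 0 < delta -> exists K1 : R, K < K1 /\
    forall r : R, K1 < r ->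
      ((- delta)%:E <
       \sum_(1 <= k <oo) (ln (L (r ^+ (2 ^ k)%N)) / (2 ^+ k * ln r))%:E)%E) ->
  (\int[mu]_(r in `[K, +oo[) ((- ln (L r)) / (r * (ln r) ^+ 2))%:E < +oo)%E.
Proof.
move=> series_gt; have [K1 [KK1 gt1]] := series_gt 1 ltr01.
have Kr : K <= K1 + 1 by lra.
have := gt1 (K1 + 1); rewrite ltrDl ltr01 dyadic_series_eq// => /(_ isT).
move=> /(ereal_inf_EFin_gt (u := fun n => - dyadic_sum a (K1 + 1) n))[s _ s_le].
apply: (integral_lty_of_dyadic_sum_bounded K_gt1 a_ge0 a_nondecr (M := - s) Kr).
by move=> n; have := s_le n; lra.
Qed.

Lemma dyadic_product_gt (delta K1 : R) : 0 < delta -> K < K1 ->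
  (forall r : R, K1 < r ->
     ((- delta)%:E <
      \sum_(1 <= k <oo) (ln (L (r ^+ (2 ^ k)%N)) / (2 ^+ k * ln r))%:E)%E) ->
  forall r : R, K1 < r ->
    ((r `^ (- delta))%:E <
     \big[*%E/1%E]_(1 <= k <oo) ((L (r ^+ (2 ^ k)%N)) `^ (2 ^- k))%:E)%E.
Proof.
move=> d0 KK1 series_gt r K1r; have Kr : K <= r by lra.
have r0 : 0 < r by apply: lt_le_trans Kr; exact: lt_trans K_gt1.
have lnr_gt0 : 0 < ln r by rewrite ln_gt0// (lt_le_trans K_gt1).
have := series_gt r K1r; rewrite dyadic_series_eq//.
move=> /(ereal_inf_EFin_gt (u := fun n => - dyadic_sum a r n))[s d_lt_s s_le].
rewrite dyadic_product_eq//; apply: (@lt_le_trans _ _ (expR (ln r * s))%:E).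
  by rewrite lte_fin /powR gt_eqF// ltr_expR mulrC ltr_pM2l.
apply: le_ereal_inf_tmp => _ [n _ <-]; rewrite lee_fin ler_expR -mulrN.
by apply: ler_wpM2l; [exact: ltW | exact: s_le].
Qed.

End LogDyadicSeries.

Theorem lemma3p4 (R : realType) (L : R -> R) (K : R) :
  (forall r, 0 < r -> 0 < L r) ->
  slowly_varying L ->
  1 < K ->
  (forall x y, K <= x -> x <= y -> L y <= L x) ->
  (forall x, K <= x -> L x < 1) ->
  ((\int[lebesgue_measure]_(r in `[K, +oo[)
        ((- ln (L r)) / (r * (ln r) ^+ 2))%:E < +oo)%E
   <->
   (forall delta : R, 0 < delta -> exists K1 : R, K < K1 /\
      forall r : R, K1 < r ->
        ((- delta)%:E <
         \sum_(1 <= k <oo) (ln (L (r ^+ (2 ^ k)%N)) / (2 ^+ k * ln r))%:E)%E))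
  /\
  (forall delta : R, 0 < delta -> forall K1 : R, K < K1 ->
     (forall r : R, K1 < r ->
        ((- delta)%:E <
         \sum_(1 <= k <oo) (ln (L (r ^+ (2 ^ k)%N)) / (2 ^+ k * ln r))%:E)%E) ->
     forall r : R, K1 < r ->
       ((r `^ (- delta))%:E <
        \big[*%E/1%E]_(1 <= k <oo) ((L (r ^+ (2 ^ k)%N)) `^ (2 ^- k))%:E)%E).
Proof.
move=> L_gt0 _ K_gt1 L_noninc L_lt1; split; first split.
- exact: dyadic_series_gt_of_integral_lty.
- exact: integral_lty_of_dyadic_series_gt.
- by move=> delta d0 K1; exact: dyadic_product_gt.
Qed.
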